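(* In the setting of the context (soft interventions, one per latent node, generic parameters), for $k\in[q]$ let $\Delta^{(k)}=(I-\Lambda^{(k)})^{-1}-(I-\Lambda^{(0)})^{-1}$. Then $\operatorname{rank}(\Delta^{(k)})\le1$, with equality if and only if $\mathrm{an}(k)\neq\emptyset$.
   Context: $\Lambda^{(0)}\in\mathbb{R}^{q\times q}$ has $\lambda^{(0)}_{i,j}\ne0$ iff $j\to i$ is an edge of a DAG $\mathcal{G}$ on $[q]$, with generic nonzero entries. For each $k\in[q]$, context $k$ is a soft intervention on node $k$: $\Lambda^{(k)}$ agrees with $\Lambda^{(0)}$ except in row $k$, whose entries are generic with $\lambda^{(k)}_{k,j}\ne\lambda^{(0)}_{k,j}$ whenever $\lambda^{(0)}_{k,j}\ne0$ and $\lambda^{(k)}_{k,j}=0$ otherwise. $\mathrm{an}(k)$ is the set of ancestors of $k$ in $\mathcal{G}$ (nodes $m\ne k$ with a directed path $m\to\cdots\to k$). *)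

From HB Require Import structures.
From mathcomp Require Import all_boot all_order all_algebra.
Set Implicit Arguments. Unset Strict Implicit. Unset Printing Implicit Defensive.
Import Order.TTheory GRing.Theory Num.Theory.
Local Open Scope ring_scope.

(* A directed graph on [q] = 'I_q is a relation E; E j i means the edge j -> i. *)

Definition is_dag (q : nat) (E : rel 'I_q) : Prop :=
  forall i j : 'I_q, E j i -> ~~ connect E i j.

Definition ancestors (q : nat) (E : rel 'I_q) (k : 'I_q) : {set 'I_q} :=
  [set m | (m != k) && connect E m k].

Definition supported_on (R : nzRingType) (q : nat) (E : rel 'I_q) (L : 'M[R]_q) : Prop :=
  forall i j : 'I_q, (L i j != 0) = E j i.

Definition soft_intervention (R : nzRingType) (q : nat) (k : 'I_q) (L0 Lk : 'M[R]_q) : Prop :=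
  [/\ forall i j : 'I_q, i != k -> Lk i j = L0 i j,
      forall j : 'I_q, L0 k j != 0 -> Lk k j != L0 k j
    & forall j : 'I_q, L0 k j = 0 -> Lk k j = 0].

Definition Delta (R : comUnitRingType) (q : nat) (L0 Lk : 'M[R]_q) : 'M[R]_q :=
  invmx (1%:M - Lk) - invmx (1%:M - L0).

(* Both [I - Λ(0)] and [I - Λ(k)] are invertible because their off-diagonal
   parts are supported on the DAG, and
   [Δ(k) = (I - Λ(k))^-1 (Λ(k) - Λ(0)) (I - Λ(0))^-1].
   So [Δ(k)] has the rank of [Λ(k) - Λ(0)], a matrix with a single possibly
   nonzero row, namely row [k]; that row vanishes exactly when [λ(0)_{k,j} = 0]
   for all [j], i.e. when [k] has no parent, i.e. no ancestor. *)
From mathcomp Require Import all_boot all_algebra.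
Set Implicit Arguments. Unset Strict Implicit. Unset Printing Implicit Defensive.
Import GRing.Theory.
Local Open Scope ring_scope.

Lemma descendants_proper (T : finType) (E : rel T) (i j : T) :
  E i j -> ~~ connect E j i ->
  [set m | connect E j m] \proper [set m | connect E i m].
Proof.
move=> Eij nji; apply/properP; split.
  by apply/subsetP => m; rewrite !inE; apply/connect_trans/connect1.
by exists i; rewrite !inE ?connect0.
Qed.

(* A nonzero fixed row would have a nonzero entry [j] with fewest descendants,
   but [u j] is a combination of the entries [u i] of its parents [i], which
   have strictly more descendants. *)
Lemma dag_fixed_row_eq0 (R : nzRingType) (q : nat) (E : rel 'I_q)
    (L : 'M[R]_q) (u : 'rV[R]_q) :
  is_dag E -> (forall i j, L i j != 0 -> E j i) -> u *m L = u -> u = 0.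
Proof.
move=> dag suppL uL; apply/rowP => j0; rewrite mxE; apply/eqP; apply: contraT => u_j0.
pose desc j := #|[set m | connect E j m]|.
have [j u_j minj] := @arg_minnP _ j0 (fun j => u 0 j != 0) desc u_j0.
have /existsP[i /andP[u_i L_ij]] : [exists i, (u 0 i != 0) && (L i j != 0)].
  apply: contraNT u_j => /existsPn no_term.
  rewrite -uL mxE big1 // => i _.
  by case/nandP: (no_term i) => /negPn/eqP->; rewrite ?mul0r ?mulr0.
have Eij := suppL _ _ L_ij.
suff : (desc i < desc j)%N by rewrite ltnNge minj.
exact/proper_card/descendants_proper/dag.
Qed.

Lemma dag_unitmx_1B (R : fieldType) (q : nat) (E : rel 'I_q) (L : 'M[R]_q) :
  is_dag E -> (forall i j, L i j != 0 -> E j i) -> (1%:M - L) \in unitmx.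
Proof.
move=> dag suppL; rewrite -row_free_unit; apply/inj_row_free => u.
by rewrite mulmxBr mulmx1 => /subr0_eq/esym; exact: dag_fixed_row_eq0 dag suppL.
Qed.

Lemma soft_intervention_supp (R : nzRingType) (q : nat) (E : rel 'I_q)
    (k : 'I_q) (L0 Lk : 'M[R]_q) :
  supported_on E L0 -> soft_intervention k L0 Lk ->
  forall i j, Lk i j != 0 -> E j i.
Proof.
move=> suppL0 [Lk_out _ Lk_zero] i j.
have [->|ik] := eqVneq i k; last by rewrite Lk_out // suppL0.
by have [/Lk_zero->|] := eqVneq (L0 k j) 0; rewrite ?eqxx // suppL0.
Qed.

Lemma invmxB (R : comUnitRingType) (n : nat) (A B : 'M[R]_n) :
  A \in unitmx -> B \in unitmx ->
  invmx B - invmx A = invmx B *m (A - B) *m invmx A.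
Proof.
by move=> uA uB; rewrite mulmxBr mulmxBl mulmxK // mulVmx // mul1mx.
Qed.

Lemma mxrank_unit_mul (F : fieldType) (n : nat) (U A V : 'M[F]_n) :
  U \in unitmx -> V \in unitmx -> \rank (U *m A *m V) = \rank A.
Proof.
by move=> uU uV; rewrite mxrankMfree ?row_free_unit // eqmxMfull ?row_full_unit.
Qed.

Lemma mxrank_single_row (F : fieldType) (m n : nat) (k : 'I_m) (A : 'M[F]_(m, n)) :
  (forall i j, i != k -> A i j = 0) -> \rank A = (A != 0).
Proof.
move=> A_out; have rank_le1 : (\rank A <= 1)%N.
  have -> : A = delta_mx k (0 : 'I_1) *m row k A.
    apply/matrixP => i j; rewrite mxE big_ord1 !mxE eqxx andbT.
    by have [->|/A_out->] := eqVneq i k; rewrite ?mul1r ?mul0r.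
  exact: leq_trans (mxrankM_maxl _ _) (rank_leq_col _).
by rewrite -mxrank_eq0; case: (\rank A) rank_le1 => [|[]].
Qed.

Lemma soft_intervention_diff_neq0 (R : nzRingType) (q : nat) (k : 'I_q)
    (L0 Lk : 'M[R]_q) :
  soft_intervention k L0 Lk -> (Lk - L0 != 0) = [exists j, L0 k j != 0].
Proof.
move=> [Lk_out Lk_ne Lk_zero]; apply/idP/idP => [|/existsP[j L0_kj]].
  apply: contraNT => /existsPn L0_k0; apply/eqP/matrixP => i j; rewrite !mxE.
  have [->|ik] := eqVneq i k; last by rewrite Lk_out ?subrr.
  by move/negPn/eqP: (L0_k0 j) => L0_kj; rewrite Lk_zero L0_kj ?subrr.
apply: contra_neq (Lk_ne j L0_kj) => /matrixP/(_ k j).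
by rewrite !mxE => /subr0_eq.
Qed.

Lemma mxrank_soft_intervention_diff (R : fieldType) (q : nat) (k : 'I_q)
    (L0 Lk : 'M[R]_q) :
  soft_intervention k L0 Lk -> \rank (Lk - L0) = [exists j, L0 k j != 0].
Proof.
move=> soft; rewrite -(soft_intervention_diff_neq0 soft).
have [Lk_out _ _] := soft.
by apply: (mxrank_single_row (k := k)) => i j ik; rewrite !mxE Lk_out ?subrr.
Qed.

Lemma ancestors_neq0 (q : nat) (E : rel 'I_q) (k : 'I_q) :
  is_dag E -> (ancestors E k != set0) = [exists j, E j k].
Proof.
move=> dag; apply/set0Pn/existsP => [[m] | [j Ejk]].
  rewrite inE => /andP[mk /connectP[p]].
  case/lastP: p => [_ /= km|p x]; first by rewrite km eqxx in mk.
  by rewrite rcons_path last_rcons => /andP[_ Ex] ->; exists (last m p).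
exists j; rewrite inE connect1 // andbT.
by apply: contraTneq (dag _ _ Ejk) => ->; rewrite connect0.
Qed.

Theorem proposition3p7 (R : realFieldType) (q : nat) (E : rel 'I_q)
    (L0 Lk : 'M[R]_q) (k : 'I_q) :
  is_dag E -> supported_on E L0 -> soft_intervention k L0 Lk ->
  (\rank (Delta L0 Lk) <= 1)%N /\
  ((\rank (Delta L0 Lk) == 1%N) <-> ancestors E k != set0).
Proof.
move=> dag suppL0 soft.
have unit0 : 1%:M - L0 \in unitmx.
  by apply: dag_unitmx_1B dag _ => i j; rewrite suppL0.
have unitk : 1%:M - Lk \in unitmx.
  exact: dag_unitmx_1B dag (soft_intervention_supp suppL0 soft).
have rank_Delta : \rank (Delta L0 Lk) = (ancestors E k != set0).
  rewrite /Delta invmxB // mxrank_unit_mul ?unitmx_inv //.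
  have -> : 1%:M - L0 - (1%:M - Lk) = Lk - L0 by rewrite opprB addrC addrA subrK.
  rewrite (mxrank_soft_intervention_diff soft) ancestors_neq0 //.
  by congr (nat_of_bool _); apply: eq_existsb => j; rewrite suppL0.
by rewrite rank_Delta; split => //; case: (_ != _).
Qed.
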